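(* Let $D$ and $A$ be as in the context, and let $f$ be any map from the set $Y=\{y_1,\dots,y_d\}$ to $A$. Then there exists a derivation $\tau\in\mathrm{Der}(D,A)$ with $\tau|_Y=f$.
   Context: $p$ is an odd prime, $d\geq 2$. $D=\langle y_1,\dots,y_d\rangle$ is a finite $p$-group of exponent $p$ and nilpotency class $2$ with $|D/\Phi(D)|=p^d$ and $|\Phi(D)/\gamma_3(D)|=p^{\binom d2}$ (the free group of rank $d$ in the variety of class-$\le2$ exponent-$p$ groups). Let $S=\langle a\rangle\cong\mathrm{F}_p$ be the trivial $D$-module, and for $1\le j\le d$ let $\delta_j:D\to S$ be the homomorphism with $\delta_j(y_j)=a$ and $\delta_j(y_i)=0$ for $i\ne j$. Let $A=S\oplus\bigoplus_{i=1}^d\langle r_i\rangle$ with each $\langle r_i\rangle\cong\mathrm{F}_p$, with $D$-action $(la+\sum_i k_ir_i)^g=la+\sum_i k_i(r_i-\delta_i(g))$ for $g\in D$. Derivations $\tau:D\to A$ satisfy $\tau(xy)=\tau(x)^y+\tau(y)$. *)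

From mathcomp Require Import all_boot all_order all_algebra all_fingroup all_solvable.
Set Implicit Arguments. Unset Strict Implicit. Unset Printing Implicit Defensive.
Import GRing.Theory.
Local Open Scope ring_scope.

(* The module A = S (+) <r_1> (+) ... (+) <r_d> over F_p is represented as
   'F_p * 'rV['F_p]_d : the pair (l, k) stands for l a + sum_i k_i r_i.
   The homomorphisms delta_j : D -> S are given by their coefficient on a,
   i.e. delta j g \in 'F_p with delta_j(g) = (delta j g) a. *)
Definition modA (p d : nat) := ('F_p * 'rV['F_p]_d)%type.

(* (l a + sum k_i r_i)^g = l a + sum k_i (r_i - delta_i(g)) *)
Definition actA (gT : finGroupType) (p d : nat) (delta : 'I_d -> gT -> 'F_p)
  (v : modA p d) (g : gT) : modA p d :=
  (v.1 - \sum_(i < d) v.2 0 i * delta i g, v.2).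

Definition is_derivation (gT : finGroupType) (D : {set gT}) (A : Type)
  (addA : A -> A -> A) (act : A -> gT -> A) (tau : gT -> A) : Prop :=
  {in D &, forall x y, tau (x * y)%g = addA (act (tau x) y) (tau y)}.

From HB Require Import structures.
From mathcomp Require Import all_boot all_order all_algebra all_fingroup all_solvable.
From mathcomp Require Import ring.
Set Implicit Arguments. Unset Strict Implicit. Unset Printing Implicit Defensive.
Import GRing.Theory.

(* A derivation tau : D -> A with tau(y_i) = f(y_i) is read off a homomorphism
   rho from D to the group K of pairs (u, l) in F_p^d x F_p with product
   (u, a)(v, b) = (u + v, a + b - u M v^T), the rows of M being the
   r-coordinates of the f(y_i): if rho(y_i) = (e_i, a-coordinate of f(y_i)),
   then tau(g) = (second coordinate of rho(g), delta(g) M).  K has exponent p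
   (as p is odd) and class 2, so rho exists as soon as D is free of rank d in
   that variety.  Freeness follows by counting: the subgroup of D x K generated
   by the pairs (y_i, rho(y_i)) has exponent p and class 2, hence order at most
   p^d p^C(d,2) = |D|, so it projects isomorphically onto D. *)

Local Open Scope group_scope.

Lemma gen_ind (gT : finGroupType) (S : {set gT}) (P : pred gT) :
  P 1 -> {in <<S>> &, forall x y, P x -> P y -> P (x * y)} ->
  {in S, forall x, P x} -> {in <<S>>, forall x, P x}.
Proof.
move=> P1 PM PS.
have gP : group_set [set x in <<S>> | P x].
  apply/group_setP; split=> [|x y]; first by rewrite inE group1 P1.
  by rewrite !inE => /andP[xS Px] /andP[yS Py]; rewrite groupM ?PM.
suff /subsetP sSP : <<S>> \subset Group gP.
  by move=> x /sSP; rewrite inE => /andP[].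
by rewrite gen_subG; apply/subsetP => x xS; rewrite inE mem_gen ?PS.
Qed.

Lemma eq_in_gen_morph_add (gT : finGroupType) (V : zmodType) (D : {group gT})
    (S : {set gT}) (f g : gT -> V) :
  D :=: <<S>> ->
  {in D &, {morph f : x y / x * y >-> (x + y)%R}} ->
  {in D &, {morph g : x y / x * y >-> (x + y)%R}} ->
  {in S, f =1 g} -> {in D, f =1 g}.
Proof.
move=> defD fM gM eq_fg x; rewrite {1}defD => xS; apply/eqP; move: x xS.
have morph0 (h : gT -> V) : {in D &, {morph h : x y / x * y >-> (x + y)%R}} -> h 1 = 0%R.
  by move=> hM; apply/(addrI (h 1)); rewrite -hM ?mulg1 ?addr0.
apply: gen_ind => [|x y xS yS /eqP fgx /eqP fgy|x xS].
- by rewrite (morph0 f) ?(morph0 g).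
- by rewrite -defD in xS yS; rewrite fM // gM // fgx fgy.
- by rewrite eq_fg.
Qed.

Lemma card_gen_comm_le (gT : finGroupType) (I : finType) (x : I -> gT) (n : nat)
    (P : {set I}) :
  (0 < n)%N -> (forall i j, commute (x i) (x j)) -> (forall i, x i ^+ n = 1) ->
  (#|<<x @: P>>| <= n ^ #|P|)%N.
Proof.
move=> n_gt0 cx xn; elim: {P}_.+1 {-2}P (ltnSn #|P|) => // k IHk P.
have [-> _|[i Pi] leP] := set_0Vmem P.
  by rewrite imset0 gen0 cards0 cards1.
have cardPi : #|P| = #|P :\ i|.+1 by rewrite (cardsD1 i) Pi.
have cxiP : commute <[x i]> <<x @: (P :\ i)>>.
  apply: centC; rewrite cycle_subG /= cent_gen.
  by apply/centP => _ /imsetP[j _ ->]; apply: cx.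
have ord_xi : (#|<[x i]>| <= n)%N by rewrite -orderE dvdn_leq // order_dvdn xn.
have IHi : (#|<<x @: (P :\ i)>>| <= n ^ #|P :\ i|)%N.
  by apply: IHk; rewrite -ltnS -cardPi.
have -> : <<x @: P>> = <[x i]> <*> <<x @: (P :\ i)>>.
  by rewrite joing_idr /cycle joing_idl -{1}(setD1K Pi) imsetU1.
rewrite comm_joingE // cardPi expnS.
apply: leq_trans (leq_mul ord_xi IHi).
by rewrite mul_cardG leq_pmulr // cardG_gt0.
Qed.

Lemma card_gen_class2_le (gT : finGroupType) (d n : nat) (x : 'I_d -> gT)
    (H : {group gT}) :
  (0 < n)%N -> H :=: <<[set x i | i : 'I_d]>> ->
  {in H, forall h, h ^+ n = 1} ->
  {in H &, forall a b, [~ a, b] \in 'C(H)} ->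
  (#|H| <= n ^ d * n ^ 'C(d, 2))%N.
Proof.
(* The commutators [~ x i, x j] with i < j generate a central subgroup C, and
   H / C is abelian, generated by the images of the x i. *)
move=> n_gt0 defH Hn Hc.
have xH i : x i \in H by rewrite defH mem_gen // imset_f.
pose T2 := [set t : 2.-tuple 'I_d | sorted ltn (map val t)].
pose c (t : 2.-tuple 'I_d) := [~ x (tnth t ord0), x (tnth t ord_max)].
pose C := <<c @: T2>>.
have cH t : c t \in H by rewrite groupR.
have cC t : c t \in 'C(H) by rewrite Hc.
have sCH : C \subset H by rewrite gen_subG; apply/subsetP => _ /imsetP[t _ ->].
have nCH : H \subset 'N(C).
  by rewrite cents_norm // centsC gen_subG; apply/subsetP => _ /imsetP[t _ ->].
have cardC : (#|C| <= n ^ 'C(d, 2))%N.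
  rewrite -(card_ltn_sorted_tuples 2 d); apply: card_gen_comm_le => // [i j|t].
    exact: (centP (cC i)) _ (cH j).
  by rewrite Hn.
have xxC i j : [~ x i, x j] \in C.
  have ltC (a b : 'I_d) : (a < b)%N -> [~ x a, x b] \in C.
    move=> lt_ab; have tT : [tuple a; b] \in T2 by rewrite inE /= andbT.
    by rewrite mem_gen // (imset_f c tT).
  case: (ltngtP i j) => [|lt_ji|/val_inj ->]; first exact: ltC.
    by rewrite -invgR groupV ltC.
  by rewrite commgg group1.
pose qx i := coset C (x i).
have defHC : H / C = <<qx @: [set: 'I_d]>>.
  have sXN : [set x i | i : 'I_d] \subset 'N(C).
    by apply: subset_trans nCH; rewrite defH subset_gen.
  rewrite {1}defH quotient_gen // /quotient morphimEsub // -imset_comp.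
  by congr <<_>>; apply/setP => z; apply/imsetP/imsetP => -[i _ ->]; exists i.
have cardHC : (#|H / C| <= n ^ d)%N.
  rewrite defHC -[in X in (_ <= _ ^ X)%N](card_ord d) -cardsT.
  apply: card_gen_comm_le => // [i j|i].
    apply/commgP; rewrite -morphR ?(subsetP nCH) //.
    exact/eqP/coset_id/xxC.
  by rewrite -morphX ?(subsetP nCH) // Hn // morph1.
rewrite -(Lagrange sCH) -card_quotient // mulnC.
exact: leq_mul.
Qed.

Lemma class2_commg_cent (gT : finGroupType) (G : {group gT}) :
  (nil_class G <= 2)%N -> {in G &, forall a b, [~ a, b] \in 'C(G)}.
Proof.
rewrite nil_class2 => sG'Z a b aG bG.
by have /setIP[] : [~ a, b] \in 'Z(G) by rewrite (subsetP sG'Z) ?mem_commg.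
Qed.

Lemma card_class2_Phi (gT : finGroupType) (G : {group gT}) :
  nilpotent G -> (nil_class G <= 2)%N ->
  #|G| = (#|G / 'Phi(G)| * #|'Phi(G) / 'L_3(G)|)%N.
Proof.
move=> nilG /(lcn_nil_classP 2 nilG) ->.
rewrite -(card_isog (quotient1_isog _)) card_quotient ?normal_norm ?Phi_normal //.
by rewrite mulnC Lagrange ?Phi_sub.
Qed.

Section Class2Extension.
Variables (gT rT : finGroupType) (n d : nat) (D : {group gT}) (y : 'I_d -> gT).

Hypotheses (n_gt0 : (0 < n)%N) (defD : D :=: <<[set y i | i : 'I_d]>>).
Hypotheses (expD : {in D, forall x, x ^+ n = 1})
           (class2D : {in D &, forall a b, [~ a, b] \in 'C(D)}).
Hypothesis cardD : (n ^ d * n ^ 'C(d, 2) <= #|D|)%N.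
Hypotheses (expR : forall u : rT, u ^+ n = 1)
           (class2R : forall u v w : rT, commute [~ u, v] w).

Lemma expg_pair (h : gT * rT) m : h ^+ m = (h.1 ^+ m, h.2 ^+ m).
Proof. by elim: m => // m IHm; rewrite !expgS IHm. Qed.

Lemma class2_extension (k : 'I_d -> rT) :
  exists rho : {morphism D >-> rT}, forall i, rho (y i) = k i.
Proof.
pose z i := (y i, k i); pose H := <<[set z i | i : 'I_d]>>%G.
have zH i : z i \in H by rewrite mem_gen // imset_f.
have fstH : [morphism of fst] @* H = D.
  rewrite morphim_gen ?subsetT // morphimEsub ?subsetT // -imset_comp defD.
  by congr <<_>>; apply/setP => g; apply/imsetP/imsetP => -[i _ ->]; exists i.
have fstHD h : h \in H -> h.1 \in D.
  by move=> hH; rewrite -fstH mem_morphim ?inE.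
have cardH : (#|H| <= #|D|)%N.
  apply: leq_trans cardD; apply: (card_gen_class2_le (x := z)) => // [h hH|a b aH bH].
    by rewrite expg_pair expD ?fstHD ?expR.
  apply/centP => c cH; apply: (congr2 pair); last exact: class2R.
  exact: (centP (class2D (fstHD a aH) (fstHD b bH))) _ (fstHD c cH).
have injH : 'injm (restrm (subsetT H) [morphism of fst]).
  apply/injmP/imset_injP; rewrite eqn_leq leq_imset_card /=.
  by rewrite -[fst @: H](morphimEsub _ (subsetT H)) fstH.
have domH : restrm (subsetT H) [morphism of fst] @* H = D.
  by rewrite morphim_restrm setIid fstH.
pose inv := invm injH.
have invM : {in D &, {morph inv : u v / u * v}} by rewrite -domH; apply: morphM.
have invE i : inv (y i) = z i by apply: (invmE injH (zH i)).
by exists (Morphism (fun u v uD vD => congr1 snd (invM u v uD vD))) => i /=; rewrite invE.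
Qed.

End Class2Extension.

Section HeisenbergGroup.
Variables (R : finComNzRingType) (d : nat) (M : 'M[R]_d).
Local Open Scope ring_scope.

Definition bform (u v : 'rV[R]_d) : R := (u *m M *m v^T) 0 0.

Lemma bformE u v : bform u v = \sum_i (u *m M) 0 i * v 0 i.
Proof. by rewrite /bform mxE; apply: eq_bigr => i _; rewrite [v^T _ _]mxE. Qed.

Lemma bformDl u u' v : bform (u + u') v = bform u v + bform u' v.
Proof. by rewrite /bform !mulmxDl mxE. Qed.

Lemma bformDr u v v' : bform u (v + v') = bform u v + bform u v'.
Proof. by rewrite /bform linearD /= mulmxDr mxE. Qed.

Lemma bformNl u v : bform (- u) v = - bform u v.
Proof. by rewrite /bform !mulNmx mxE. Qed.

Lemma bform0l v : bform 0 v = 0.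
Proof. by rewrite /bform !mul0mx mxE. Qed.

Lemma bform0r u : bform u 0 = 0.
Proof. by rewrite /bform trmx0 mulmx0 mxE. Qed.

Lemma bformMnl u v m : bform (u *+ m) v = bform u v *+ m.
Proof. by elim: m => [|m IHm]; rewrite ?bform0l // !mulrS bformDl IHm. Qed.

(* The unused index [M] gives each form its own group structure on the pairs. *)
Definition heis of 'M[R]_d := ('rV[R]_d * R)%type.

Definition heis_mul (x y : heis M) : heis M :=
  (x.1 + y.1, x.2 + y.2 - bform x.1 y.1).
Definition heis_one : heis M := (0, 0).
Definition heis_inv (x : heis M) : heis M := (- x.1, - x.2 - bform x.1 x.1).

Lemma heis_mulA : associative heis_mul.
Proof.
move=> [u a] [v b] [w c]; rewrite /heis_mul /=; congr (_, _); first by rewrite addrA.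
by rewrite bformDl bformDr; ring.
Qed.

Lemma heis_mul1 : left_id heis_one heis_mul.
Proof. by move=> [u a]; rewrite /heis_mul /= bform0l !add0r subr0. Qed.

Lemma heis_mulV : left_inverse heis_one heis_inv heis_mul.
Proof. by move=> [u a]; rewrite /heis_mul /= addNr bformNl; congr (_, _); ring. Qed.

HB.instance Definition _ := Finite.on (heis M).
HB.instance Definition _ := Finite_isGroup.Build (heis M) heis_mulA heis_mul1 heis_mulV.

Lemma heis_mulE (x y : heis M) : (x * y)%g = heis_mul x y.
Proof. by []. Qed.

Lemma heis_invE (x : heis M) : (x^-1)%g = heis_inv x.
Proof. by []. Qed.

Lemma heis_expE (x : heis M) m :
  (x ^+ m)%g = (x.1 *+ m, x.2 *+ m - bform x.1 x.1 *+ 'C(m, 2)).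
Proof.
elim: m => [|m IHm]; first by rewrite expg0 /= !mulr0n subr0.
rewrite expgSr IHm heis_mulE /heis_mul /= bformMnl binS bin1 mulrnDr.
by rewrite !mulrSr; congr (_, _); ring.
Qed.

Lemma heis_expg_pchar (p : nat) (x : heis M) :
  p \in [pchar R] -> odd p -> (x ^+ p = 1)%g.
Proof.
move=> pcharRp odd_p; rewrite heis_expE bin2odd // mulrnA.
by rewrite -scaler_nat pcharf0 // scale0r !(mulrn_pchar pcharRp) mul0rn subr0.
Qed.

Lemma heis_commg_commute (x y z : heis M) : commute [~ x, y] z.
Proof.
have comm1 : ([~ x, y]%g).1 = 0.
  by rewrite /commg /conjg !heis_mulE heis_invE /= (addrC x.1) addKr addNr.
case: [~ x, y]%g comm1 => u a /= ->.
by rewrite /commute !heis_mulE /heis_mul /= bform0l bform0r addrC (addrC z.2).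
Qed.

End HeisenbergGroup.

Lemma heis_morph_derivation (p d : nat) (gT : finGroupType) (D : {group gT})
    (delta : 'I_d -> gT -> 'F_p) (M : 'M['F_p]_d) (rho : {morphism D >-> heis M}) :
  {in D, forall g, (rho g).1 = (\row_j delta j g)%R} ->
  is_derivation D (fun u v => (u + v)%R) (actA delta)
    (fun g => ((rho g).2, (rho g).1 *m M)%R).
Proof.
move=> rho1 u v uD vD; rewrite /actA /= morphM // heis_mulE /= mulmxDl bformE.
congr (_, _); rewrite addrAC; congr (_ - _ + _)%R; apply: eq_bigr => i _.
by rewrite (rho1 v) // !mxE.
Qed.

Theorem lemma3p6 (p d : nat) (gT : finGroupType) (D : {group gT})
  (y : 'I_d -> gT) (delta : 'I_d -> gT -> 'F_p) (f : gT -> modA p d) :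
  prime p -> odd p -> (2 <= d)%N ->
  D :=: <<[set y i | i : 'I_d]>>%g ->
  exponent D = p ->
  nilpotent D -> nil_class D = 2 ->
  #|D / 'Phi(D)|%g = (p ^ d)%N ->
  #|'Phi(D) / 'L_3(D)|%g = (p ^ 'C(d, 2))%N ->
  (forall j, {in D &, {morph delta j : u v / (u * v)%g >-> (u + v)%R}}) ->
  (forall i j, delta j (y i) = ((i == j)%:R)%R) ->
  exists tau : gT -> modA p d,
    is_derivation D (fun u v => (u + v)%R) (actA delta) tau /\
    (forall x, x \in [set y i | i : 'I_d] -> tau x = f x).
Proof.
move=> pr_p odd_p _ defD expD nilD clD cardDPhi cardPhiL3 deltaM deltaY.
pose M : 'M['F_p]_d := (\matrix_(i, j) (f (y i)).2 0 j)%R.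
have pcharFp : p \in [pchar 'F_p]%R by apply: pchar_Fp.
have expDp : {in D, forall x, x ^+ p = 1} by move=> x /expg_exponent; rewrite expD.
have cardD : (p ^ d * p ^ 'C(d, 2) <= #|D|)%N.
  by rewrite (card_class2_Phi nilD) ?clD // cardDPhi cardPhiL3.
have [rho rhoY] := @class2_extension _ (heis M) p d D y
  (prime_gt0 pr_p) defD expDp (class2_commg_cent (eq_leq clD)) cardD
  (fun u => heis_expg_pchar u pcharFp odd_p) (@heis_commg_commute _ _ M)
  (fun i => (delta_mx 0 i, (f (y i)).1)%R).
have rho1 : {in D, forall g, (rho g).1 = (\row_j delta j g)%R}.
  apply: (eq_in_gen_morph_add defD) => [u v uD vD|u v uD vD|_ /imsetP[i _ ->]].
  - by rewrite morphM // heis_mulE.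
  - by apply/matrixP => k j; rewrite !mxE deltaM.
  - by rewrite rhoY; apply/matrixP => k j; rewrite !mxE deltaY ord1 eqxx eq_sym.
exists (fun g => ((rho g).2, (rho g).1 *m M)%R).
split=> [|_ /imsetP[i _ ->]]; first exact: heis_morph_derivation.
have rowM : (delta_mx 0 i *m M)%R = (f (y i)).2.
  by rewrite -rowE; apply/matrixP => k j; rewrite !mxE ord1.
by rewrite rhoY; case: (f (y i)) rowM => a r /= rowM; congr (_, _); exact: rowM.
Qed.
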